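(* Let $N>K$ and let $\mathbf{d}_u=(d_1,\dots,d_K)$ be a demand vector with pairwise distinct entries. Let the cache configuration $\mathcal{C}$ be produced by the old placement scheme with $F$ packets per file, and let $t=KM/N$. If $$F\le \frac{N/M}{2K}\left(1-\frac{1}{N/M}\right)\exp\!\left(2t\Big(1-\frac{t}{K}\Big)\Big(1-\frac1K\Big)\right),$$ then $$\mathbb{E}\big[R^{nd}(\mathcal{C},\mathbf{d}_u)\big]\ge \frac12\Big(1-\frac{M}{N}\Big)K,$$ where the expectation is over the random placement.
   Context: Setting: a server holds a library of $N$ files, each split into $F$ packets (packet $f$ of file $n$ denoted $(n,f)$); $K$ users each have a cache holding $M$ files' worth of packets ($M\le N$). For a cache configuration, $S_{n,f}\subseteq[1:K]$ denotes the set of users whose cache stores packet $(n,f)$. User $k$ requests file $d_k$. Old placement scheme (with $MF/N$ an integer): for every user $k$ and every file $n$, a subset of $MF/N$ of the $F$ packets of file $n$ is chosen uniformly at random and stored in user $k$'s cache; all choices are mutually independent. Delivery scheme and its rate $R^{nd}$: for $k\in[1:K]$ and $T\subseteq[1:K]\setminus\{k\}$, let $V_{k,T}$ be the set of packets $f$ of file $d_k$ with $S_{d_k,f}=T$ exactly. For every nonempty $\mathcal{S}\subseteq[1:K]$ the scheme transmits the XOR of the packet vectors $V_{k,\mathcal{S}\setminus\{k\}}$, $k\in\mathcal{S}$ (shorter vectors zero-padded to the longest). Its normalized number of transmissions is $$R^{nd}(\mathcal{C},\mathbf{d})=\sum_{\emptyset\ne\mathcal{S}\subseteq[1:K]}\frac{\max_{k\in\mathcal{S}}|V_{k,\mathcal{S}\setminus\{k\}}|}{F}.$$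 *)

From HB Require Import structures.
From mathcomp Require Import all_boot all_order all_algebra.
From mathcomp Require Import all_classical all_reals all_analysis.
Set Implicit Arguments. Unset Strict Implicit. Unset Printing Implicit Defensive.
Import Order.TTheory GRing.Theory Num.Theory.
Local Open Scope ring_scope.

(* A cache configuration: for user k and file n, the set of packets of file n
   stored in the cache of user k. Users are 'I_K, files 'I_N, packets 'I_F. *)
Definition config (K N F : nat) := {ffun 'I_K * 'I_N -> {set 'I_F}}.

Definition S_set (K N F : nat) (C : config K N F) (n : 'I_N) (f : 'I_F)
  : {set 'I_K} := [set k | f \in C (k, n)].

Definition V_set (K N F : nat) (C : config K N F) (d : 'I_K -> 'I_N)
  (k : 'I_K) (T : {set 'I_K}) : {set 'I_F} :=
  [set f | S_set C (d k) f == T].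

Definition Rnd (R : numFieldType) (K N F : nat) (C : config K N F)
  (d : 'I_K -> 'I_N) : R :=
  \sum_(S : {set 'I_K} | S != finset.set0)
     ((\max_(k in S) #|V_set C d k (S :\ k)|)%N)%:R / F%:R.

(* Old placement scheme with L = MF/N packets per (user, file): each user
   stores, independently for each file, a uniformly random L-subset of the
   F packets.  The product of these independent uniform choices is the
   uniform distribution on the following set of configurations. *)
Definition old_placement (K N F L : nat) : {set config K N F} :=
  [set C : config K N F | [forall p, #|C p| == L]].

Definition expected_Rnd (R : numFieldType) (K N F L : nat)
  (d : 'I_K -> 'I_N) : R :=
  (\sum_(C in old_placement K N F L) Rnd R C d)
    / (#|old_placement K N F L|)%:R.

From HB Require Import structures.
From mathcomp Require Import all_boot all_order all_algebra.
From mathcomp Require Import all_classical all_reals all_analysis.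
From mathcomp Require Import ring lra.
Import Order.TTheory GRing.Theory Num.Theory.
Set Implicit Arguments. Unset Strict Implicit. Unset Printing Implicit Defensive.

Local Open Scope ring_scope.

(* Write p = M/N = L/F.  Under the old placement every indicator "packet f of
   file n is cached by user k" is Bernoulli(p), independently across distinct
   files.  A maximum of nonnegative integers is at least their sum minus all
   products of pairs, so F R^{nd} is at least
     sum_S sum_{k in S} |V_{k,S\k}|  -  sum_S sum_{j <> k in S} |V_{j,S\j}| |V_{k,S\k}|.
   The first sum counts each packet of d_k missing from user k's cache exactly
   once, i.e. it equals K(F - L).  As the demands are distinct, the two packets
   in a pair term come from different files, so the expected pair term is
   F^2 K(K-1) (p(1-p))^2 (p^2 + (1-p)^2)^(K-2).  Since p^2 + (1-p)^2 <=
   exp(-2p(1-p)), the bound on F makes this at most half of F K (1 - p). *)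

Definition packet_draws (F L : nat) : {set {set 'I_F}} := [set A : {set 'I_F} | #|A| == L].

Lemma card_packet_draws F L : #|packet_draws F L| = 'C(F, L).
Proof. by rewrite card_draws card_ord. Qed.

Lemma old_placementE K N F L :
  old_placement K N F L = [set C in ffun_on (mem (packet_draws F L))].
Proof.
by apply/setP => C; rewrite !inE; apply/forallP/ffun_onP => H p; have := H p; rewrite !inE.
Qed.

Lemma card_old_placement K N F L :
  #|old_placement K N F L| = ('C(F, L) ^ (K * N))%N.
Proof. by rewrite old_placementE cardsE card_ffun_on card_packet_draws card_prod !card_ord. Qed.

Lemma card_packet_draws_notin F L (f : 'I_F) :
  #|[set A in packet_draws F L | f \notin A]| = 'C(F.-1, L).
Proof.
rewrite -[F in F.-1]card_ord -(cardsC1 f) -cards_draws.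
by apply: eq_card => A; rewrite !inE andbC finset.subsetC finset.sub1set !inE.
Qed.

Definition bernoulli_mass (R : pzRingType) (p : R) (b : bool) : R :=
  if b then p else 1 - p.

Lemma prod_boolr (R : comPzSemiRingType) (I : finType) (b : pred I) :
  \prod_i ((b i)%:R : R) = ([forall i, b i])%:R.
Proof.
have [/forallP bT|/forallPn [i bi]] := boolP [forall i, b i].
  by rewrite big1 // => i _; rewrite bT.
by rewrite (bigD1 i) //= (negbTE bi) mul0r.
Qed.

Lemma prod_pair_supp (R : comPzSemiRingType) (I J : finType) (H : I * J -> R) (n n' : J) :
  n != n' -> (forall u m, m != n -> m != n' -> H (u, m) = 1) ->
  \prod_p H p = \prod_u (H (u, n) * H (u, n')).
Proof.
move=> nn' H1; transitivity (\prod_u \prod_m H (u, m)).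
  by rewrite pair_bigA; apply: eq_bigr => -[].
have n'n : n' != n by rewrite eq_sym.
apply: eq_bigr => u _; rewrite (bigD1 n) //= (bigD1 n') //=.
by rewrite big1 ?mulr1 // => m /andP[]; apply: H1.
Qed.

Lemma S_set_eq K N F (C : config K N F) n f T :
  (S_set C n f == T) = [forall u, (f \in C (u, n)) == (u \in T)].
Proof.
apply/eqP/forallP => [<- u|H]; first by rewrite inE.
by apply/setP => u; rewrite inE; apply/eqP.
Qed.

Section PlacementMean.
Variables (R : realType) (K N F L : nat).
Hypothesis leLF : (L <= F)%N.

Definition place_mean (g : config K N F -> R) : R :=
  (\sum_(C in old_placement K N F L) g C) / #|old_placement K N F L|%:R.

Definition draw_mean (h : {set 'I_F} -> R) : R :=
  (\sum_(A in packet_draws F L) h A) / #|packet_draws F L|%:R.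

Lemma card_packet_draws_neq0 : (#|packet_draws F L|%:R : R) != 0.
Proof. by rewrite pnatr_eq0 card_packet_draws -lt0n bin_gt0. Qed.

Lemma card_old_placement_gt0 : (0 : R) < #|old_placement K N F L|%:R.
Proof. by rewrite ltr0n card_old_placement expn_gt0 bin_gt0 leLF. Qed.

Lemma place_mean_prod (G : 'I_K * 'I_N -> {set 'I_F} -> R) :
  place_mean (fun C => \prod_p G p (C p)) = \prod_p draw_mean (G p).
Proof.
have sum_prod : \sum_(C in old_placement K N F L) \prod_p G p (C p)
    = \prod_p \sum_(A in packet_draws F L) G p A.
  by rewrite bigA_distr_big old_placementE; apply: eq_bigl => C; rewrite inE.
have card_prod : (#|old_placement K N F L|%:R : R) = \prod_(p : 'I_K * 'I_N) #|packet_draws F L|%:R.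
  by rewrite card_old_placement card_packet_draws natrX prodr_const card_prod !card_ord.
by rewrite /place_mean sum_prod card_prod -prodf_div.
Qed.

Lemma draw_mean1 : draw_mean (fun=> 1) = 1.
Proof. by rewrite /draw_mean sumr_const divff // card_packet_draws_neq0. Qed.

Lemma place_mean_sum (I : finType) (P : pred I) (g : I -> config K N F -> R) :
  place_mean (fun C => \sum_(i | P i) g i C) = \sum_(i | P i) place_mean (g i).
Proof. by rewrite /place_mean exchange_big mulr_suml. Qed.

Lemma place_mean_affine (a b : R) (g : config K N F -> R) :
  place_mean (fun C => a + b * g C) = a + b * place_mean g.
Proof.
have c0 := card_old_placement_gt0.
rewrite /place_mean big_split sumr_const -mulr_sumr /= mulrDl -[a *+ _]mulr_natr.
by rewrite mulfK ?gt_eqF // mulrA.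
Qed.

Lemma ler_place_mean (g h : config K N F -> R) :
  (forall C, C \in old_placement K N F L -> g C <= h C) ->
  place_mean g <= place_mean h.
Proof.
move=> gh; rewrite ler_pM2r ?invr_gt0 ?card_old_placement_gt0 //.
exact: ler_sum.
Qed.

Lemma draw_mean_mem (f : 'I_F) (b : bool) :
  draw_mean (fun A => ((f \in A) == b)%:R) = bernoulli_mass (L%:R / F%:R) b.
Proof.
have F0 : (0 < F)%N by case: (F) f => [[]|].
have notin_mean : draw_mean (fun A => (f \notin A)%:R) = 1 - L%:R / F%:R.
  have Fn : (F%:R : R) != 0 by rewrite pnatr_eq0 -lt0n.
  rewrite /draw_mean -natr_sum -big_mkcondr /= sum1dep_card.
  rewrite card_packet_draws_notin card_packet_draws.
  apply: (mulfI Fn); rewrite mulrA -natrM mul_bin_down natrM natrB //.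
  by field; rewrite Fn pnatr_eq0 -lt0n bin_gt0 leLF.
case: b; last first.
  by rewrite /= -notin_mean; congr draw_mean; apply/funext => A; case: (f \in A).
have -> : draw_mean (fun A => ((f \in A) == true)%:R)
    = draw_mean (fun A => 1 - (f \notin A)%:R).
  by congr draw_mean; apply/funext => A; case: (f \in A); rewrite ?subr0 ?subrr.
rewrite /draw_mean sumrB mulrBl -!/(draw_mean _) draw_mean1 notin_mean /=.
by rewrite opprB addrC subrK.
Qed.

Lemma place_mean_S_set_pair (n n' : 'I_N) (f g : 'I_F) (T T' : {set 'I_K}) :
  n != n' ->
  place_mean (fun C => ((S_set C n f == T) && (S_set C n' g == T'))%:R)
  = \prod_u (bernoulli_mass (L%:R / F%:R) (u \in T)
             * bernoulli_mass (L%:R / F%:R) (u \in T')).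
Proof.
move=> nn'; have n'n : n' != n by rewrite eq_sym.
pose G (p : 'I_K * 'I_N) (A : {set 'I_F}) : R :=
  if p.2 == n then ((f \in A) == (p.1 \in T))%:R
  else if p.2 == n' then ((g \in A) == (p.1 \in T'))%:R else 1.
have G1 u m A : m != n -> m != n' -> G (u, m) A = 1.
  by rewrite /G /= => /negbTE-> /negbTE->.
transitivity (place_mean (fun C => \prod_p G p (C p))).
  congr place_mean; apply/funext => C.
  rewrite (prod_pair_supp (H := fun p => G p (C p)) nn') => [|u m mn mn']; last exact: G1.
  rewrite /G /= eqxx (negbTE n'n) eqxx big_split /=.
  by rewrite !prod_boolr -natrM mulnb -!S_set_eq.
rewrite place_mean_prod (prod_pair_supp (H := fun p => draw_mean (G p)) nn') => [|u m mn mn'].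
  apply: eq_bigr => u _; rewrite /G /= eqxx (negbTE n'n) eqxx.
  by rewrite !draw_mean_mem.
rewrite -[RHS]draw_mean1; congr draw_mean; apply/funext => A; exact: G1.
Qed.

End PlacementMean.

Lemma leq_sum_max_pairs (I : finType) (S : {set I}) (a : I -> nat) : S != finset.set0 ->
  (\sum_(k in S) a k <= \max_(k in S) a k +
     \sum_(j in S) \sum_(k in S | k != j) a j * a k)%N.
Proof.
move=> S0; have [m mS maxm] : {m | m \in S & \max_(k in S) a k = a m}.
  by apply: eq_bigmax_cond; rewrite card_gt0.
rewrite maxm (bigD1 m) //= leq_add2l [X in (_ <= X)%N](bigD1 m) //=.
apply: (leq_trans _ (leq_addr _ _)); apply: leq_sum => k /andP[kS _].
have : (a k <= a m)%N by rewrite -maxm; apply: leq_bigmax_cond.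
by case: (a m) => [|am]; [rewrite leqn0 => /eqP-> | rewrite leq_pmull].
Qed.

Lemma card_V_set K N F (C : config K N F) d k T :
  #|V_set C d k T| = (\sum_f (S_set C (d k) f == T))%N.
Proof. by rewrite /V_set -sum1dep_card big_mkcond; apply: eq_bigr => f _; case: ifP. Qed.

Lemma sum_S_set_eq_setD1 K N F (C : config K N F) (n : 'I_N) (k : 'I_K) (f : 'I_F) :
  (\sum_(S : {set 'I_K} | k \in S) (S_set C n f == S :\ k))%N = (f \notin C (k, n)) :> nat.
Proof.
have kS : (k \in S_set C n f) = (f \in C (k, n)) by rewrite inE.
rewrite -kS; have [kin|kout] := boolP (k \in S_set C n f).
  by rewrite big1 // => S _; case: eqP => // E; move: kin; rewrite E setD11.
rewrite (bigD1 (k |: S_set C n f)) ?setU11 //= setU1K // eqxx big1 // => S /andP[kS' ne].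
by case: eqP => // E; move: ne; rewrite E finset.setD1K ?eqxx.
Qed.

Lemma sum_card_V_set K N F L (C : config K N F) (d : 'I_K -> 'I_N) :
  C \in old_placement K N F L ->
  (\sum_(S : {set 'I_K} | S != finset.set0) \sum_(k in S) #|V_set C d k (S :\ k)|)%N
  = (K * (F - L))%N.
Proof.
rewrite inE => /forallP placeC.
transitivity (\sum_k \sum_(S : {set 'I_K} | k \in S) #|V_set C d k (S :\ k)|)%N.
  rewrite [RHS](exchange_big_dep (fun S : {set 'I_K} => S != finset.set0)) /=.
    by apply: eq_bigr => S _; apply: eq_bigl.
  by move=> k S _; apply: contraTneq => ->; rewrite finset.in_set0.
rewrite -[K in RHS]card_ord -sum_nat_const; apply: eq_bigr => k _.
rewrite (eq_bigr _ (fun S _ => card_V_set C d k (S :\ k))) exchange_big /=.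
rewrite (eq_bigr _ (fun f _ => sum_S_set_eq_setD1 C (d k) k f)).
rewrite -big_mkcond sum1dep_card -(eqP (placeC (k, d k))) -[F in (F - _)%N]card_ord.
by rewrite -(cardsC (C (k, d k))) addKn.
Qed.

Definition overlap K N F (C : config K N F) (d : 'I_K -> 'I_N) : nat :=
  \sum_(S : {set 'I_K} | S != finset.set0) \sum_(j in S) \sum_(k in S | k != j)
     #|V_set C d j (S :\ j)| * #|V_set C d k (S :\ k)|.

Lemma Rnd_ge_overlap (R : realType) K N F L (C : config K N F) (d : 'I_K -> 'I_N) :
  (0 < F)%N -> C \in old_placement K N F L ->
  (K * (F - L))%:R - (overlap C d)%:R <= F%:R * Rnd R C d.
Proof.
move=> F0 placeC.
have -> : F%:R * Rnd R C d = \sum_(S : {set 'I_K} | S != finset.set0)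
    (\max_(k in S) #|V_set C d k (S :\ k)|)%:R.
  rewrite /Rnd mulr_sumr; apply: eq_bigr => S _.
  by rewrite mulrC divfK // pnatr_eq0 -lt0n.
rewrite -natr_sum lerBlDr -natrD ler_nat -(sum_card_V_set d placeC) -big_split /=.
by apply: leq_sum => S S0; apply: leq_sum_max_pairs.
Qed.

Lemma sum_set_prod (R : comPzSemiRingType) (I : finType) (h : I -> bool -> R) :
  \sum_(S : {set I}) \prod_i h i (i \in S) = \prod_i (h i true + h i false).
Proof.
rewrite (eq_bigr (fun i => \sum_(b : bool) h i b)) => [|i _]; last by rewrite big_bool.
rewrite bigA_distr_bigA /= (reindex (fun w : {ffun I -> bool} => [set i | w i])) /=.
  by apply: eq_bigr => w _; apply: eq_bigr => i _; rewrite inE.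
apply: onW_bij; exists (fun S : {set I} => [ffun i => i \in S]).
  by move=> w; apply/ffunP => i; rewrite ffunE inE.
by move=> S; apply/setP => i; rewrite inE ffunE.
Qed.

Definition overlap_mass (R : pzRingType) (K : nat) (p : R) : R :=
  (p * (1 - p)) ^+ 2 * (p * p + (1 - p) * (1 - p)) ^+ (K - 2).

Lemma sum_supsets_pair_mass (R : comPzRingType) K (j k : 'I_K) (p : R) : j != k ->
  \sum_(S : {set 'I_K} | (j \in S) && (k \in S))
     \prod_u (bernoulli_mass p (u \in S :\ j) * bernoulli_mass p (u \in S :\ k))
  = overlap_mass K p.
Proof.
move=> jk; have kj : k != j by rewrite eq_sym.
pose h (u : 'I_K) (b : bool) : R :=
  if u == j then (if b then (1 - p) * p else 0)
  else if u == k then (if b then p * (1 - p) else 0)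
  else (if b then p * p else (1 - p) * (1 - p)).
transitivity (\sum_(S : {set 'I_K}) \prod_u h u (u \in S)).
  rewrite big_mkcond /=; apply: eq_bigr => S _.
  have [jS|jS] := boolP (j \in S); last first.
    by rewrite [RHS](bigD1 j) //= /h eqxx (negbTE jS) mul0r.
  have [kS|kS] := boolP (k \in S); last first.
    by rewrite [RHS](bigD1 k) //= /h eqxx (negbTE kj) (negbTE kS) mul0r.
  apply: eq_bigr => u _; rewrite /h /bernoulli_mass !inE.
  have [->|uj] := eqVneq u j; first by rewrite jk jS.
  have [->|uk] := eqVneq u k; first by rewrite kS.
  by case: (u \in S).
rewrite sum_set_prod (bigD1 j) //= (bigD1 k) /=; last by rewrite kj.
rewrite /h !eqxx (negbTE kj) /= !addr0.
rewrite (eq_bigr (fun _ => p * p + (1 - p) * (1 - p))); last first.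
  by move=> u /andP[uj uk]; rewrite (negbTE uj) (negbTE uk).
rewrite prodr_const.
have -> : #|[pred i | (i != j) && (i != k)]| = (K - 2)%N.
  rewrite -[K in (K - 2)%N]card_ord -(cardsC [set j; k]) cards2 jk addKn.
  by apply: eq_card => i; rewrite !inE negb_or.
by rewrite mulrCA mulrA -expr2 [(1 - p) * p]mulrC.
Qed.

Lemma sum_nonempty_pairs (V : nmodType) (I : finType) (Y : {set I} -> I -> I -> V) :
  \sum_(S : {set I} | S != finset.set0) \sum_(j in S) \sum_(k in S | k != j) Y S j k
  = \sum_j \sum_(k | k != j) \sum_(S : {set I} | (j \in S) && (k \in S)) Y S j k.
Proof.
rewrite (exchange_big_dep xpredT) //=; apply: eq_bigr => j _.
rewrite (exchange_big_dep (fun k => k != j)) /=; last by move=> S k _ /andP[].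
apply: eq_bigr => k kj; apply: eq_bigl => S; rewrite kj andbT.
case: (boolP (j \in S)) => jS; rewrite ?andbF //.
by have -> : S != finset.set0 by apply: contraTneq jS => ->; rewrite finset.in_set0.
Qed.

Lemma overlapE (R : pzSemiRingType) K N F (C : config K N F) (d : 'I_K -> 'I_N) :
  ((overlap C d)%:R : R)
  = \sum_j \sum_(k | k != j) \sum_(S : {set 'I_K} | (j \in S) && (k \in S))
     \sum_f \sum_g ((S_set C (d j) f == S :\ j) && (S_set C (d k) g == S :\ k))%:R.
Proof.
rewrite /overlap sum_nonempty_pairs !natr_sum; apply: eq_bigr => j _.
rewrite natr_sum; apply: eq_bigr => k _; rewrite natr_sum; apply: eq_bigr => S _.
rewrite natrM !card_V_set !natr_sum mulr_suml; apply: eq_bigr => f _.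
by rewrite mulr_sumr; apply: eq_bigr => g _; rewrite -natrM mulnb.
Qed.

Lemma place_mean_overlap (R : realType) K N F L (d : 'I_K -> 'I_N) :
  injective d -> (L <= F)%N ->
  place_mean L (fun C : config K N F => (overlap C d)%:R : R)
  = (F ^ 2 * (K * K.-1))%:R * overlap_mass K (L%:R / F%:R : R).
Proof.
move=> inj_d leLF; set p : R := L%:R / F%:R.
under [X in place_mean _ X]funext => C do rewrite overlapE.
transitivity (\sum_j \sum_(k | k != j) \sum_(S : {set 'I_K} | (j \in S) && (k \in S))
    \sum_(f : 'I_F) \sum_(g : 'I_F)
      \prod_u (bernoulli_mass p (u \in S :\ j) * bernoulli_mass p (u \in S :\ k))).
  rewrite place_mean_sum; apply: eq_bigr => j _.
  rewrite place_mean_sum; apply: eq_bigr => k kj.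
  rewrite place_mean_sum; apply: eq_bigr => S _.
  rewrite place_mean_sum; apply: eq_bigr => f _.
  rewrite place_mean_sum; apply: eq_bigr => g _.
  by apply: place_mean_S_set_pair => //; apply: contra kj => /eqP/inj_d->.
transitivity (\sum_(j : 'I_K) \sum_(k | k != j) (F ^ 2)%:R * overlap_mass K p).
  apply: eq_bigr => j _; apply: eq_bigr => k kj.
  rewrite -(sum_supsets_pair_mass p (_ : j != k)) 1?eq_sym // mulr_sumr.
  by apply: eq_bigr => S _; rewrite !sumr_const card_ord -mulrnA mulnn mulr_natl.
rewrite (eq_bigr (fun=> (F ^ 2)%:R * overlap_mass K p *+ K.-1)) => [|j _].
  by rewrite sumr_const card_ord -mulrnA -[LHS]mulr_natr mulrAC -natrM [(K.-1 * K)%N]mulnC.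
rewrite sumr_const (eq_card (B := [set~ j])) => [|k]; last by rewrite !inE.
by rewrite cardsC1 card_ord.
Qed.

Lemma sqr_add_sqr_compl_le_expR (R : realType) (p : R) :
  p * p + (1 - p) * (1 - p) <= expR (- (2 * (p * (1 - p)))).
Proof.
apply: le_trans (expR_ge1Dx _).
by rewrite le_eqVlt; apply/orP; left; apply/eqP; ring.
Qed.

Lemma overlap_mass_le (R : realType) (K : nat) (p F : R) :
  0 < p -> p <= 1 -> 0 <= F ->
  F <= (1 / p) / (2 * K%:R) * (1 - p) * expR (2 * (p * (1 - p)) * (K%:R - 1)) ->
  F * (K * K.-1)%:R * overlap_mass K p <= K%:R * (1 - p) / 2.
Proof.
move=> p0 p1 F0; case: K => [|[|k]] /= FB.
- by rewrite mul0r mulr0 mul0r.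
- by rewrite muln0 mulr0 mul0r divr_ge0 ?mulr_ge0 ?subr_ge0.
set q := p * (1 - p); set E := expR (2 * q); set r := p * p + (1 - p) * (1 - p).
have E0 : 0 < E := expR_gt0 _.
have Er : E * r <= 1.
  by rewrite -(expRxMexpNx_1 (2 * q)) ler_wpM2l ?(ltW E0) //; apply: sqr_add_sqr_compl_le_expR.
have r0 : 0 <= r by rewrite /r; nra.
have pE : p * (1 - p) ^+ 2 * E <= 1.
  apply: le_trans Er; rewrite mulrC ler_wpM2l ?(ltW E0) // /r expr2.
  have : 0 <= (1 - p) * ((1 - p) * (1 - p)) by rewrite !mulr_ge0 ?subr_ge0.
  nra.
have K1 : (k.+2%:R : R) - 1 = k.+1%:R by rewrite -addn1 natrD addrK.
rewrite K1 expRM_natr exprS -/q -/E in FB.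
rewrite /overlap_mass -/q -/r (_ : (k.+2 - 2)%N = k) ?subn2 //.
have mass0 : 0 <= (k.+2 * k.+1)%:R * (q ^+ 2 * r ^+ k).
  by rewrite mulr_ge0 // mulr_ge0 ?sqr_ge0 ?exprn_ge0.
rewrite -mulrA; apply: le_trans (ler_wpM2r mass0 FB) _.
have -> : 1 / p / (2 * k.+2%:R) * (1 - p) * (E * E ^+ k)
         * ((k.+2 * k.+1)%:R * (q ^+ 2 * r ^+ k))
    = (1 - p) * k.+1%:R / 2 * (p * (1 - p) ^+ 2 * E) * (E * r) ^+ k.
  have k0 : (0 : R) <= k%:R := ler0n _ _.
  by rewrite natrM !exprMn /q; field; rewrite !gt_eqF //; lra.
have ErK : (E * r) ^+ k <= 1 by rewrite exprn_ile1 // mulr_ge0 // ltW.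
have c0 : 0 <= (1 - p) * k.+1%:R / 2 by rewrite !mulr_ge0 ?subr_ge0.
apply: (@le_trans _ _ ((1 - p) * k.+1%:R / 2)).
  by rewrite -mulrA ler_piMr // mulr_ile1 ?exprn_ge0 ?mulr_ge0 ?(ltW E0) ?(ltW p0) ?subr_ge0.
by rewrite [_ * (1 - p)]mulrC ler_pM2r // ler_wpM2l ?subr_ge0 // ler_nat.
Qed.

Lemma expected_Rnd_ge (R : realType) K N F L (d : 'I_K -> 'I_N) :
  injective d -> (L <= F)%N -> (0 < F)%N ->
  K%:R * (1 - L%:R / F%:R) - F%:R * (K * K.-1)%:R * overlap_mass K (L%:R / F%:R)
  <= expected_Rnd R F L d.
Proof.
move=> inj_d leLF F0; set p : R := L%:R / F%:R.
have Fn : (F%:R : R) != 0 by rewrite pnatr_eq0 -lt0n.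
have -> : K%:R * (1 - p) - F%:R * (K * K.-1)%:R * overlap_mass K p
    = place_mean L (fun C : config K N F =>
        (K * (F - L))%:R / F%:R + (- F%:R^-1) * (overlap C d)%:R).
  rewrite place_mean_affine // place_mean_overlap // -/p !natrM natrB // /p.
  by field.
apply: ler_place_mean => // C placeC.
rewrite mulNr [F%:R^-1 * _]mulrC -mulrBl ler_pdivrMr ?ltr0n // mulrC.
exact: Rnd_ge_overlap.
Qed.

Lemma cache_bound_in_rate (R : realType) (K : nat) (M N : R) :
  0 < M -> 0 < N -> (0 < K)%N ->
  let t := K%:R * M / N in
  N / M / (2 * K%:R) * (1 - 1 / (N / M)) * expR (2 * t * (1 - t / K%:R) * (1 - 1 / K%:R))
  = 1 / (M / N) / (2 * K%:R) * (1 - M / N) * expR (2 * (M / N * (1 - M / N)) * (K%:R - 1)).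
Proof.
move=> M0 N0 K0 t; have Kn : (K%:R : R) != 0 by rewrite pnatr_eq0 -lt0n.
congr (_ * _ * expR _); rewrite /t; field; by rewrite ?Kn !gt_eqF.
Qed.

Theorem theorem5 (R : realType) (N K F L : nat) (M : R)
  (d : 'I_K -> 'I_N)
  (hNK : (K < N)%N) (hK : (0 < K)%N) (hF : (0 < F)%N)
  (hM0 : 0 < M) (hMN : M <= N%:R)
  (hL : M * F%:R / N%:R = L%:R)
  (hd : injective d)
  (hFbound : let t := K%:R * M / N%:R in
     F%:R <= (N%:R / M) / (2 * K%:R) * (1 - 1 / (N%:R / M))
             * expR (2 * t * (1 - t / K%:R) * (1 - 1 / K%:R))) :
  expected_Rnd R F L d >= 1 / 2 * (1 - M / N%:R) * K%:R.
Proof.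
have N0 : (0 : R) < N%:R by rewrite ltr0n (ltn_trans hK hNK).
have F0 : (0 : R) < F%:R by rewrite ltr0n.
set p := M / N%:R.
have p0 : 0 < p by rewrite divr_gt0.
have p1 : p <= 1 by rewrite ler_pdivrMr // mul1r.
have hp : L%:R / F%:R = p by rewrite -hL mulrAC mulfK ?gt_eqF.
have leLF : (L <= F)%N.
  by rewrite -(ler_nat R) -(divfK (lt0r_neq0 F0) L%:R) hp ler_piMl // ltW.
move: hFbound; rewrite /= cache_bound_in_rate // -/p => FB.
have := overlap_mass_le p0 p1 (ltW F0) FB.
have := expected_Rnd_ge R hd leLF hF; rewrite hp.
lra.
Qed.
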